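(* In a monotonous quiver, if $X$ and $Y$ are isotypic phylogenetic vertices, then any universal evolution for $X$ and any universal evolution for $Y$ are isotypic (they have the same length $m$ and, writing them as $A_0\leftarrow\cdots\leftarrow A_m=X$ and $B_0\leftarrow\cdots\leftarrow B_m=Y$, one has $A_k\sim B_k$ for all $k=0,\dots,m$).
   Context: A quiver consists of a class of vertices and, for each ordered pair of vertices $(A,B)$, a set of edges $A\to B$ (loops and multiple edges allowed). An evolution of length $m\ge 0$ is a sequence $A_0\leftarrow A_1\leftarrow\cdots\leftarrow A_m$ of vertices together with edges $A_k\to A_{k-1}$ ($1\le k\le m$); $A_0$ is its initial and $A_m$ its terminal vertex. Write $A\le B$ ($A$ is an ancestor of $B$) if there is an evolution with initial vertex $A$ and terminal vertex $B$; $A,B$ are isotypic ($A\sim B$) if $A\le B$ and $B\le A$. A vertex $A$ is primitive if every ancestor of $A$ is isotypic to $A$. A full evolution for $X$ is an evolution with primitive initial vertex and terminal vertex $X$. The height $h(X)$ is the smallest length of a full evolution for $X$ ($\infty$ if none). An evolution $\alpha=(A_0\leftarrow\cdots\leftarrow A_m)$ embeds in $\beta=(B_0\leftarrow\cdots\leftarrow B_n)$ if $m\le n$ and there are $0\le r_0<\cdots<r_m\le n$ with $A_k\sim B_{r_k}$. A universal evolution for $X$ is a full evolution for $X$ embedding in every full evolution for $X$; $X$ is phylogenetic if one exists. A quiver is monotonous if $h(A)\ge h(B)$ for every edge $A\to B$. *)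

From Stdlib Require Import Arith.

(* A quiver: vertices of type V, and for each ordered pair (A,B) a type
   E A B of edges A -> B (loops and multiple edges allowed). *)

(* An evolution A_0 <- A_1 <- ... <- A_m : length m, vertices vert 0..m
   (values of vert beyond m are irrelevant), and for 0 <= k < m an edge
   A_{k+1} -> A_k. *)
Record evolution (V : Type) (E : V -> V -> Type) : Type := Evolution {
  len : nat;
  vert : nat -> V;
  edge : forall k : nat, k < len -> E (vert (S k)) (vert k)
}.
Arguments len {V E} _.
Arguments vert {V E} _ _.
Arguments edge {V E} _ _ _.

Definition initial {V E} (a : @evolution V E) : V := vert a 0.
Definition terminal {V E} (a : @evolution V E) : V := vert a (len a).

Definition ancestor {V} (E : V -> V -> Type) (A B : V) : Prop :=
  exists a : evolution V E, initial a = A /\ terminal a = B.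

Definition isotypic {V} (E : V -> V -> Type) (A B : V) : Prop :=
  ancestor E A B /\ ancestor E B A.

Definition primitive {V} (E : V -> V -> Type) (A : V) : Prop :=
  forall B, ancestor E B A -> isotypic E B A.

Definition full_evolution {V} (E : V -> V -> Type) (X : V)
  (a : evolution V E) : Prop :=
  primitive E (initial a) /\ terminal a = X.

(* is_height E X n : h(X) = n (finite).  h(X) = infinity iff no n works. *)
Definition is_height {V} (E : V -> V -> Type) (X : V) (n : nat) : Prop :=
  (exists a, full_evolution E X a /\ len a = n) /\
  (forall a, full_evolution E X a -> n <= len a).

(* h(A) >= h(B) in nat extended by infinity *)
Definition height_ge {V} (E : V -> V -> Type) (A B : V) : Prop :=
  forall n, is_height E A n -> exists m, is_height E B m /\ m <= n.

Definition embeds {V} (E : V -> V -> Type) (a b : evolution V E) : Prop :=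
  len a <= len b /\
  exists r : nat -> nat,
    (forall k, k < len a -> r k < r (S k)) /\
    r (len a) <= len b /\
    (forall k, k <= len a -> isotypic E (vert a k) (vert b (r k))).

Definition universal_evolution {V} (E : V -> V -> Type) (X : V)
  (a : evolution V E) : Prop :=
  full_evolution E X a /\
  forall b, full_evolution E X b -> embeds E a b.

Definition phylogenetic {V} (E : V -> V -> Type) (X : V) : Prop :=
  exists a, universal_evolution E X a.

Definition monotonous {V} (E : V -> V -> Type) : Prop :=
  forall A B : V, E A B -> height_ge E A B.

Definition isotypic_evolutions {V} (E : V -> V -> Type)
  (a b : evolution V E) : Prop :=
  len a = len b /\ forall k, k <= len a -> isotypic E (vert a k) (vert b k).

(* In a monotonous quiver heights can only grow along an evolution, so
   isotypic vertices have equal heights.  The k-th vertex of a full evolution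
   of minimal length has height exactly k, otherwise it could be shortcut.
   Appending an evolution from Y to X to a universal evolution b for Y yields
   a full evolution for X, into which a universal evolution a for X embeds.  The embedding preserves heights, and the only
   vertex of height k < h(Y) in the concatenation is b_k; hence a_k ~ b_k. *)

From Stdlib Require Import Arith Lia.
From Corelib Require Import ssreflect.

Section Evolutions.
Context {V : Type} {E : V -> V -> Type}.

Definition concat_vert (a c : evolution V E) (j : nat) : V :=
  if j <=? len a then vert a j else vert c (j - len a).

Definition concat_edge (a c : evolution V E) (H : terminal a = initial c)
  (k : nat) (hk : k < len a + len c) :
  E (concat_vert a c (S k)) (concat_vert a c k).
Proof.
  rewrite /concat_vert.
  case: (le_lt_dec (S k) (len a)) => [l|l].
  - rewrite (proj2 (Nat.leb_le _ _) l) (proj2 (Nat.leb_le k (len a)) ltac:(lia)).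
    exact: edge a k l.
  - rewrite (proj2 (Nat.leb_gt _ _) l).
    case: (Nat.eq_dec k (len a)) => [->|ne].
    + rewrite Nat.leb_refl Nat.sub_succ_l ?Nat.sub_diag //.
      change (vert a (len a)) with (terminal a); rewrite H.
      exact: edge c 0 ltac:(lia).
    + rewrite (proj2 (Nat.leb_gt k (len a)) ltac:(lia)).
      rewrite Nat.sub_succ_l; first lia.
      exact: edge c (k - len a) ltac:(lia).
Defined.

Definition concat (a c : evolution V E) (H : terminal a = initial c) :
  evolution V E :=
  Evolution V E (len a + len c) (concat_vert a c) (concat_edge a c H).

Definition prefix (e : evolution V E) (k : nat) (hk : k <= len e) :
  evolution V E :=
  Evolution V E k (vert e) (fun j hj => edge e j ltac:(lia)).

Definition suffix (e : evolution V E) (k : nat) : evolution V E :=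
  Evolution V E (len e - k) (fun j => vert e (j + k))
    (fun j hj => edge e (j + k) ltac:(lia)).

Lemma concat_vert_le a c (H : terminal a = initial c) j :
  j <= len a -> vert (concat a c H) j = vert a j.
Proof. by move=> hj; rewrite /= /concat_vert (proj2 (Nat.leb_le _ _) hj). Qed.

Lemma concat_vert_gt a c (H : terminal a = initial c) j :
  len a < j -> vert (concat a c H) j = vert c (j - len a).
Proof. by move=> hj; rewrite /= /concat_vert (proj2 (Nat.leb_gt _ _) hj). Qed.

Lemma concat_terminal a c (H : terminal a = initial c) :
  terminal (concat a c H) = terminal c.
Proof.
  rewrite /terminal; case: (Nat.eq_dec (len c) 0) => [c0|c0].
  - rewrite concat_vert_le /=; first lia.
    by move: H; rewrite /terminal /initial c0 Nat.add_0_r.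
  - rewrite concat_vert_gt /=; first lia.
    by f_equal; lia.
Qed.

Lemma full_evolution_concat {X a c} (H : terminal a = initial c) :
  full_evolution E X a -> full_evolution E (terminal c) (concat a c H).
Proof.
  move=> [Hprim _]; split; last exact: concat_terminal.
  by rewrite /initial concat_vert_le; first lia.
Qed.

Lemma is_height_unique {X n m} : is_height E X n -> is_height E X m -> n = m.
Proof.
  move=> [[a [Ha <-]] Hn] [[b [Hb <-]] Hm].
  by apply: Nat.le_antisymm; [apply: Hn | apply: Hm].
Qed.

Lemma universal_evolution_height {X a} :
  universal_evolution E X a -> is_height E X (len a).
Proof.
  move=> [Hfull Hembed]; split; first by exists a.
  by move=> b /Hembed [].
Qed.

Lemma min_full_evolution_vert_height {X a} :
  full_evolution E X a -> is_height E X (len a) ->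
  forall k, k <= len a -> is_height E (vert a k) k.
Proof.
  move=> [Hprim Hterm] [_ Hmin] k hk; split.
  - by exists (prefix a k hk).
  - move=> d [Hdprim Hdterm]; case: (le_lt_dec k (len d)) => // Hlt.
    have Hjoin : terminal d = initial (suffix a k) by [].
    have Hshort : full_evolution E X (concat d (suffix a k) Hjoin).
      have [Hprim' Hterm'] := full_evolution_concat Hjoin (conj Hdprim Hdterm).
      by split; rewrite // Hterm' -Hterm /terminal /=; f_equal; lia.
    by have /= := Hmin _ Hshort; lia.
Qed.

Lemma strict_increasing_le {r : nat -> nat} {m} :
  (forall k, k < m -> r k < r (S k)) -> forall k, k <= m -> r k <= r m.
Proof.
  elim: m => [|m IH] Hr k hk; first by have -> : k = 0 by lia.
  case: (Nat.eq_dec k (S m)) => [-> //|ne].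
  have := IH (fun i hi => Hr i ltac:(lia)) k ltac:(lia).
  have := Hr m ltac:(lia); lia.
Qed.

Section Monotonous.
Hypothesis Hmono : monotonous E.

Lemma ancestor_height {A B n} :
  ancestor E A B -> is_height E B n -> exists m, is_height E A m /\ m <= n.
Proof.
  move=> [e [<- <-]]; rewrite /terminal /initial.
  suff: forall k, k <= len e -> forall n, is_height E (vert e k) n ->
    exists m, is_height E (vert e 0) m /\ m <= n by apply.
  elim=> [|k IH] hk {}n Hn; first by exists n.
  have [m [Hm Hmn]] := Hmono _ _ (edge e k hk) n Hn.
  have [p [Hp Hpm]] := IH ltac:(lia) m Hm.
  by exists p; split; last lia.
Qed.

Lemma isotypic_height {A B n} :
  isotypic E A B -> is_height E A n -> is_height E B n.
Proof.
  move=> [HAB HBA] HA.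
  have [m [HB Hmn]] := ancestor_height HBA HA.
  have [p [HA' Hpm]] := ancestor_height HAB HB.
  have Hnp := is_height_unique HA HA'.
  by have -> : n = m by lia.
Qed.

Lemma concat_min_full_evolution_height_position {Y b c}
    (H : terminal b = initial c) {j k} :
  full_evolution E Y b -> is_height E Y (len b) ->
  initial c = Y -> j <= len (concat b c H) ->
  is_height E (vert (concat b c H) j) k -> k < len b -> j = k.
Proof.
  move=> Hfull HY Hinit hj Hk hkb.
  case: (le_lt_dec j (len b)) => hjb.
  - rewrite concat_vert_le // in Hk.
    exact: is_height_unique (min_full_evolution_vert_height Hfull HY j hjb) Hk.
  - rewrite concat_vert_gt // in Hk.
    have Hanc : ancestor E Y (vert c (j - len b)).
      by exists (prefix c (j - len b) ltac:(simpl in hj; lia)).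
    have [m [HYm Hmk]] := ancestor_height Hanc Hk.
    by have := is_height_unique HY HYm; lia.
Qed.

End Monotonous.
End Evolutions.

Theorem corollary6p4 (V : Type) (E : V -> V -> Type)
  (Hmono : monotonous E) (X Y : V)
  (HX : phylogenetic E X) (HY : phylogenetic E Y) (HXY : isotypic E X Y)
  (a b : evolution V E)
  (Ha : universal_evolution E X a) (Hb : universal_evolution E Y b) :
  isotypic_evolutions E a b.
Proof.
  have HhX := universal_evolution_height Ha.
  have HhY := universal_evolution_height Hb.
  have Hlen : len a = len b
    by exact: is_height_unique (isotypic_height Hmono HXY HhX) HhY.
  split=> // k hk.
  move: Ha Hb => [[Haprim Haterm] Hembed] [Hbfull _].
  case: (Nat.eq_dec k (len a)) => [->|hka].
    by rewrite [vert a _]Haterm Hlen [vert b _](proj2 Hbfull).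
  have [c [Hcinit Hcterm]] := proj2 HXY.
  have Hjoin : terminal b = initial c by rewrite Hcinit (proj2 Hbfull).
  have Hd := full_evolution_concat Hjoin Hbfull; rewrite Hcterm in Hd.
  have [_ [r [Hr [Hrlen Hriso]]]] := Hembed _ Hd.
  have Hak := min_full_evolution_vert_height (conj Haprim Haterm) HhX k hk.
  have Hdk := isotypic_height Hmono (Hriso k hk) Hak.
  have Hrkd : r k <= len (concat b c Hjoin).
    by have := strict_increasing_le Hr k hk; lia.
  have Hrk := concat_min_full_evolution_height_position
                Hmono Hjoin Hbfull HhY Hcinit Hrkd Hdk ltac:(lia).
  by have := Hriso k hk; rewrite Hrk concat_vert_le; first lia.
Qed.
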